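(* Let $\Omega$ be a smooth bounded domain in $\mathbb{R}^N$, $N\ge 2$, and let $2<p<\infty$ if $N=2$, $2<p<2N/(N-2)$ if $N\ge3$. For each $0<\varepsilon\le1$ let $u^\varepsilon$ be a critical point of \[ J_\varepsilon(u) = \int_\Omega \left[\tfrac12 |\nabla u|^2 + \mathcal{B}\!\left(\tfrac{u-1}{\varepsilon}\right) - \tfrac1p (u-1)_+^p\right] dx,\quad u\in H^1_0(\Omega), \] with $J_\varepsilon(u^\varepsilon)=c_\varepsilon$. Let $A_0>0$ be a constant such that $(u^\varepsilon-1)_+^{p-1}\le A_0$ in $\Omega$ for all $0<\varepsilon\le 1$, and let $\varphi_0>0$ solve $-\Delta\varphi_0=A_0$ in $\Omega$, $\varphi_0=0$ on $\partial\Omega$. Then for $0<\varepsilon\le1$, $u^\varepsilon(x)\le\varphi_0(x)$ for all $x\in\Omega$; in particular $\{u^\varepsilon\ge1\}\subset\{\varphi_0\ge1\}\subset\subset\Omega$.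
   Context: $t_+=\max\{t,0\}$. $\beta:\mathbb{R}\to[0,2]$ is a fixed smooth function with $\beta(t)=0$ for $t\le0$ and $t\ge1$, $\beta(t)>0$ for $0<t<1$, $\int_0^1\beta=1$; $\mathcal{B}(t)=\int_0^t\beta(s)\,ds$. $\Gamma_\varepsilon=\{\gamma\in C([0,1],H^1_0(\Omega)):\gamma(0)=0,\ J_\varepsilon(\gamma(1))<0\}$ and $c_\varepsilon=\inf_{\gamma\in\Gamma_\varepsilon}\max_{u\in\gamma([0,1])}J_\varepsilon(u)$. Critical points of $J_\varepsilon$ are classical solutions of $\Delta u=\frac1\varepsilon\beta(\frac{u-1}{\varepsilon})-(u-1)_+^{p-1}$ in $\Omega$, $u=0$ on $\partial\Omega$. (Such a constant $A_0$ exists since the $u^\varepsilon$ are uniformly bounded.) *)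

From HB Require Import structures.
From mathcomp Require Import all_boot all_order all_algebra.
From mathcomp Require Import all_classical all_reals all_analysis.
Set Implicit Arguments. Unset Strict Implicit. Unset Printing Implicit Defensive.
Import Order.TTheory GRing.Theory Num.Theory.
Import numFieldNormedType.Exports.
Local Open Scope classical_set_scope.
Local Open Scope ring_scope.

Definition unitv {R : realType} {N : nat} (i : 'I_N) : 'rV[R]_N :=
  delta_mx 0 i.

Definition partial {R : realType} {N : nat} (i : 'I_N)
  (f : 'rV[R]_N -> R) (x : 'rV[R]_N) : R :=
  derive f x (unitv i).

Definition laplacian {R : realType} {N : nat}
  (f : 'rV[R]_N -> R) (x : 'rV[R]_N) : R :=
  \sum_(i < N) partial i (partial i f) x.

Definition C2_on {R : realType} {N : nat} (O : set 'rV[R]_N)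
  (f : 'rV[R]_N -> R) : Prop :=
  (forall x, O x -> differentiable f x) /\
  (forall i x, O x -> differentiable (partial i f) x) /\
  (forall i j x, O x -> {for x, continuous (partial j (partial i f))}).

(* Boundary of Omega (Omega open) *)
Definition bdry {R : realType} {N : nat} (O : set 'rV[R]_N) : set 'rV[R]_N :=
  closure O `\` O.

Definition classical_dirichlet_sol {R : realType} {N : nat}
  (O : set 'rV[R]_N) (g : 'rV[R]_N -> R -> R) (u : 'rV[R]_N -> R) : Prop :=
  C2_on O u /\
  {within closure O, continuous u} /\
  (forall x, bdry O x -> u x = 0) /\
  (forall x, O x -> laplacian u x = g x (u x)).

Definition pos_part {R : realType} (t : R) : R := Num.max t 0.

Definition smooth1 {R : realType} (f : R -> R) : Prop :=
  forall n x, derivable (iter n (@derive1 R R) f) x 1.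

Definition admissible_beta {R : realType} (beta : R -> R) : Prop :=
  smooth1 beta /\
  (forall t, 0 <= beta t <= 2) /\
  (forall t, (t <= 0 \/ 1 <= t) -> beta t = 0) /\
  (forall t, 0 < t < 1 -> 0 < beta t) /\
  (\int[@lebesgue_measure R]_(t in `[0%R, 1%R]) (beta t)%:E = 1%:E)%E.

From HB Require Import structures.
From mathcomp Require Import all_boot all_order all_algebra.
From mathcomp Require Import all_classical all_reals all_analysis.
From mathcomp Require Import lra ring.
Import Order.TTheory GRing.Theory Num.Theory.
Import numFieldNormedType.Exports.
Local Open Scope classical_set_scope.
Local Open Scope ring_scope.
Set Implicit Arguments. Unset Strict Implicit. Unset Printing Implicit Defensive.

(* Put w := u^eps - phi0.  It vanishes on the boundary and
   Delta w = eps^-1 beta((u^eps - 1)/eps) - (u^eps - 1)_+^(p-1) + A0 >= 0,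
   since beta >= 0; so the weak maximum principle gives w <= 0.  The maximum principle is proved classically: if w > 0
   somewhere, then w + d x_1^2 with d > 0 small still exceeds its boundary values
   somewhere, so it has an interior maximum, where every pure second derivative is
   <= 0; but its Laplacian is Delta w + 2 d > 0.  Finally phi0 is continuous up to
   the boundary and vanishes there, so {phi0 >= 1} stays away from the boundary. *)

Section one_variable.
Context {R : realType}.
Implicit Types (g : R -> R) (a r : R).

Lemma derive1_gt0_right g a :
  'D_1 g a = 0 -> derivable ('D_1 g) a 1 -> 0 < 'D_1 ('D_1 g) a ->
  exists2 e, 0 < e & forall h, 0 < h < e -> 0 < 'D_1 g (a + h).
Proof.
move=> g'a0 g'd g''a0.
have /cvgr_gt /(_ 0 g''a0) [e /= e0 He] := g'd.
exists e => // h /andP[h0 he].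
have := He h; rewrite /ball_ /= sub0r normrN gtr0_norm // => /(_ he (lt0r_neq0 h0)).
rewrite /= g'a0 subr0 /GRing.scale /= mulr1 addrC.
by rewrite pmulr_rgt0 // invr_gt0.
Qed.

Lemma derive2_le0_at_max g a r : 0 < r ->
  (forall t, `|t - a| < r -> derivable g t 1 /\ g t <= g a) ->
  derivable ('D_1 g) a 1 -> 'D_1 ('D_1 g) a <= 0.
Proof.
move=> r0 gmax g'd.
have itv t : (t \in `]a - r, a + r[) = (`|t - a| < r).
  by rewrite in_itv /= ltr_distl.
have [_ g'a0] : is_derive a 1 g 0.
  apply: (@derive1_at_max R g (a - r) (a + r) a).
  - lra.
  - by move=> t; rewrite itv => /gmax[].
  - by rewrite itv subrr normr0.
  - by move=> t; rewrite itv => /gmax[].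
rewrite leNgt; apply/negP => /(derive1_gt0_right g'a0 g'd)[e e0 g'pos].
pose s := Num.min (e / 2) (r / 2).
have s0 : 0 < s by rewrite lt_min !divr_gt0.
have se : s < e by rewrite gt_min ltr_pdivrMr //; lra.
have sr : s < r by rewrite gt_min; apply/orP; right; lra.
have gd t : a <= t <= a + s -> derivable g t 1.
  by move=> ?; apply: (gmax t _).1; rewrite ger0_norm; lra.
have [c /[!in_itv] /= /andP[ac cs] mvt] :
    exists2 c, c \in `]a, a + s[ & g (a + s) - g a = 'D_1 g c * (a + s - a).
  apply: (@MVT R g ('D_1 g)); first lra.
    by move=> t /[!in_itv] /= ?; apply/derivableP/gd; lra.
  by apply: derivable_within_continuous => t /[!in_itv] /= ?; apply: gd.
have := g'pos (c - a); rewrite subrKC => /(_ ltac:(lra)) g'c.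
have gas : g (a + s) <= g a.
  by apply: (gmax _ _).2; rewrite addrC addKr gtr0_norm.
have : 0 < 'D_1 g c * (a + s - a) by rewrite mulr_gt0 //; lra.
rewrite -mvt; lra.
Qed.
End one_variable.

Section partial_derivatives.
Context {R : realType} {n : nat}.
Implicit Types (O : set 'rV[R]_n) (f g : 'rV[R]_n -> R) (a v x y : 'rV[R]_n).

Lemma line_quotientE f a v (t : R) :
  (fun h : R => h^-1 *: (((fun s : R => f (a + s *: v)) \o shift t) (h *: 1)
                         - f (a + t *: v)))
  = (fun h => h^-1 *: ((f \o shift (a + t *: v)) (h *: v) - f (a + t *: v))).
Proof.
apply/funext => h /=; congr (_ *: (f _ - _)).
by rewrite [h *: 1]mulr1 scalerDl addrCA addrC.
Qed.

Lemma derive1_line f a v (t : R) :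
  'D_1 (fun s : R => f (a + s *: v)) t = 'D_v f (a + t *: v).
Proof. by rewrite /derive line_quotientE. Qed.

Lemma derivable1_line f a v (t : R) :
  derivable (fun s : R => f (a + s *: v)) t 1 <-> derivable f (a + t *: v) v.
Proof. by rewrite /derivable line_quotientE. Qed.

Definition partial2_derivable_on O f : Prop :=
  forall i x, O x -> derivable f x (unitv i) /\ derivable (partial i f) x (unitv i).

Lemma C2_on_partial2_derivable O f : C2_on O f -> partial2_derivable_on O f.
Proof.
by case=> df [d2f _] i x Ox; split; apply: diff_derivable; [apply: df | apply: d2f].
Qed.

Lemma laplacian_le0_at_max O f y : open O -> partial2_derivable_on O f -> O y ->
  (forall x, O x -> f x <= f y) -> laplacian f y <= 0.
Proof.
move=> Oo df Oy fmax; rewrite /laplacian; apply: sumr_le0 => i _.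
have [r r0 lineO] : exists2 r : R, 0 < r & forall t, `|t - 0| < r -> O (y + t *: unitv i).
  have : (fun t : R => y + t *: unitv i) @ 0 --> y + 0 *: unitv i.
    by apply: cvgD; [exact: cvg_cst | exact: scalel_continuous].
  rewrite scale0r addr0 => /(_ _ (Oo _ Oy))[r /= r0 yrO].
  by exists r => // t tr; apply: yrO; rewrite /ball_ /= distrC.
have := @derive2_le0_at_max R (fun t => f (y + t *: unitv i)) 0 r r0.
have -> : 'D_1 (fun t : R => f (y + t *: unitv i)) = fun t => partial i f (y + t *: unitv i).
  by apply/funext => t; rewrite derive1_line.
rewrite derive1_line scale0r addr0; apply.
- by move=> t /lineO Ot; split; [apply/derivable1_line; exact: (df i _ Ot).1 | exact: fmax].
- by apply/derivable1_line; rewrite scale0r addr0; case: (df i _ Oy).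
Qed.

Lemma partialDZ f g (c : R) i x : derivable f x (unitv i) -> derivable g x (unitv i) ->
  partial i (f + c \*: g) x = partial i f x + c * partial i g x.
Proof.
by move=> df dg; rewrite /partial (deriveD df (derivableZ (k:=c) dg)) (deriveZ c dg).
Qed.

Lemma near_partialDZ O f g (c : R) i x : open O -> O x ->
  partial2_derivable_on O f -> partial2_derivable_on O g ->
  {near x, partial i (f + c \*: g) =1 partial i f + c \*: partial i g}.
Proof.
move=> Oo Ox df dg; apply: filterS (Oo _ Ox) => z Oz.
by rewrite partialDZ //; [case: (df i z Oz) | case: (dg i z Oz)].
Qed.

Lemma partial2_derivable_onDZ O f g (c : R) : open O ->
  partial2_derivable_on O f -> partial2_derivable_on O g ->
  partial2_derivable_on O (f + c \*: g).
Proof.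
move=> Oo df dg i x Ox; have [df1 df2] := df i x Ox; have [dg1 dg2] := dg i x Ox.
split; first exact: (derivableD df1 (derivableZ (k:=c) dg1)).
have /(filterS (fun z => esym)) := near_partialDZ c i Oo Ox df dg.
move/near_eq_derivable; apply.
exact: (derivableD df2 (derivableZ (k:=c) dg2)).
Qed.

Lemma laplacianDZ O f g (c : R) x : open O -> O x ->
  partial2_derivable_on O f -> partial2_derivable_on O g ->
  laplacian (f + c \*: g) x = laplacian f x + c * laplacian g x.
Proof.
move=> Oo Ox df dg; rewrite /laplacian mulr_sumr -big_split; apply: eq_bigr => i _.
rewrite {1}/partial (near_eq_derive _ (near_partialDZ c i Oo Ox df dg)).
by apply: partialDZ; [case: (df i x Ox) | case: (dg i x Ox)].
Qed.
End partial_derivatives.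

Section coordinate_square.
Context {R : realType} {n : nat} (i : 'I_n).

Definition coord_sq (x : 'rV[R]_n) : R := x ord0 i ^+ 2.

Lemma coord_sq_continuous : continuous coord_sq.
Proof.
move=> x; apply: (@continuous_comp _ _ _ (fun y : 'rV[R]_n => y ord0 i) (fun t => t ^+ 2)).
  exact: coord_continuous.
exact: exprn_continuous.
Qed.

Lemma is_derive_coord (x v : 'rV[R]_n) :
  is_derive x v (fun y : 'rV[R]_n => y ord0 i) (v ord0 i).
Proof.
have quotient : (fun h : R => h^-1 *: (((fun y : 'rV[R]_n => y ord0 i) \o shift x) (h *: v) - x ord0 i))
    @ 0^' --> v ord0 i.
  apply: cvg_near_cst; near=> h.
  rewrite /= !mxE addrK [_ *: _]mulrA mulVf ?mul1r //.
  by near: h; exact: nbhs_dnbhs_neq.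
apply: DeriveDef; first by apply/cvg_ex; exists (v ord0 i).
exact: cvg_lim quotient.
Unshelve. all: by end_near.
Qed.

Lemma unitv_coord j : unitv j ord0 i = (i == j)%:R :> R.
Proof. by rewrite /unitv mxE eqxx. Qed.

Lemma partial_coord_sq j : partial j coord_sq = fun x => 2 * (i == j)%:R * x ord0 i.
Proof.
apply/funext => x; rewrite /partial.
have [_ ->] := is_deriveX 2 (is_derive_coord x (unitv j)).
by rewrite unitv_coord [_ *: _]mulrC; ring.
Qed.

Lemma partial2_coord_sq j x : partial j (partial j coord_sq) x = 2 * (i == j)%:R.
Proof.
rewrite partial_coord_sq /partial.
have [_ ->] := is_deriveZ (2 * (i == j)%:R) (is_derive_coord x (unitv j)).
by rewrite unitv_coord [_ *: _]mulrC; case: (i == j); rewrite ?mul1r ?mul0r ?mulr0.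
Qed.

Lemma partial2_derivable_coord_sq O : partial2_derivable_on O coord_sq.
Proof.
move=> j x _; split; first by case: (is_deriveX 2 (is_derive_coord x (unitv j))).
by rewrite partial_coord_sq; case: (is_deriveZ (2 * (i == j)%:R) (is_derive_coord x (unitv j))).
Qed.

Lemma laplacian_coord_sq x : laplacian coord_sq x = 2.
Proof.
rewrite /laplacian (eq_bigr _ (fun j _ => partial2_coord_sq j x)) (bigD1 i) //=.
by rewrite eqxx mulr1 big1 ?addr0 // => j /negPf; rewrite eq_sym => ->; rewrite mulr0.
Qed.
End coordinate_square.

Section maximum_principle.
Context {R : realType} {n : nat}.
Implicit Types (A O : set 'rV[R]_n) (f w : 'rV[R]_n -> R).

Lemma bounded_closure A : bounded_set A -> bounded_set (closure A).
Proof.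
move=> Ab; have {}Ab : \forall M \near +oo, A `<=` [set x | `|x| <= M] := Ab.
change (\forall M \near +oo, closure A `<=` [set x | `|x| <= M]).
near=> M; have AM : A `<=` [set x | `|x| <= M] by near: M.
have : closed [set x : 'rV[R]_n | `|x| <= M].
  rewrite -[X in closed X]/((fun x : 'rV[R]_n => `|x|) @^-1` [set y | y <= M]).
  by apply: closed_comp; [move=> x _; exact: norm_continuous | exact: closed_le].
by move/closure_id => ->; exact: closureS.
Unshelve. all: by end_near.
Qed.

Lemma compact_closure_bounded A : bounded_set A -> compact (closure A).
Proof.
by move=> Ab; apply: bounded_closed_compact; [exact: bounded_closure | exact: closed_closure].
Qed.

Lemma closure_superlevel_subset O f (c : R) : 0 < c ->
  {within closure O, continuous f} -> (forall x, bdry O x -> f x = 0) ->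
  closure [set x | O x /\ c <= f x] `<=` O.
Proof.
move=> c0 fc fb x xS; apply: contrapT => xO.
have xO' : closure O x by apply: (closureS _ xS) => z [].
have /cvgr_lt /(_ c) : f @ within (closure O) (nbhs x) --> f x.
  exact: (subspace_continuousP _ _).1 fc x xO'.
rewrite fb //; case/(_ c0)/xS => z [[Oz czf]] /(_ (subset_closure Oz)).
lra.
Qed.

Lemma subharmonic_le0 O w : (0 < n)%N -> open O -> bounded_set O ->
  {within closure O, continuous w} -> (forall x, bdry O x -> w x <= 0) ->
  partial2_derivable_on O w -> (forall x, O x -> 0 <= laplacian w x) ->
  forall x, O x -> w x <= 0.
Proof.
move=> n0 Oo Ob wc wb dw lw x0 Ox0; rewrite leNgt; apply/negP => wx0.
pose q := @coord_sq R n (Ordinal n0).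
have cO : compact (closure O) by exact: compact_closure_bounded.
have ne : closure O !=set0 by exists x0; exact: subset_closure.
have qc : {within closure O, continuous q}.
  by apply: continuous_subspaceT; exact: coord_sq_continuous.
have [ym _ qmax] := EVT_max_rV ne cO qc.
have q0 z : 0 <= q z by exact: sqr_ge0.
pose d := w x0 / (2 * (q ym + 1)).
have d0 : 0 < d by rewrite divr_gt0 // mulr_gt0 // ltr_wpDl.
have dqym : d * q ym < w x0.
  have : d * (2 * (q ym + 1)) = w x0 by rewrite mulfVK // gt_eqF // mulr_gt0 // ltr_wpDl.
  have := mulr_ge0 (ltW d0) (q0 ym); lra.
pose V := w + d \*: q.
have VE z : V z = w z + d * q z by [].
have Vc : {within closure O, continuous V}.
  apply: within_continuousD wc _; apply: continuous_subspaceT => z.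
  by apply: continuousZl_tmp; exact: coord_sq_continuous.
have [y /[!inE] Oy' Vmax] := EVT_max_rV ne cO Vc.
have wx0Vy : w x0 <= V y.
  have : V x0 <= V y by apply: Vmax; rewrite inE; exact: subset_closure.
  by rewrite !VE; have := mulr_ge0 (ltW d0) (q0 x0); lra.
have [Oy|nOy] := pselect (O y); last first.
  have wy := wb y (conj Oy' nOy).
  have qy : d * q y <= d * q ym.
    by apply: ler_wpM2l; [exact: ltW | apply: qmax; rewrite inE].
  by move: wx0Vy; rewrite VE; lra.
have dq : partial2_derivable_on O q by exact: partial2_derivable_coord_sq.
have dV : partial2_derivable_on O V := partial2_derivable_onDZ d Oo dw dq.
have : laplacian V y <= 0.
  apply: (laplacian_le0_at_max Oo dV Oy) => z Oz.
  by apply: Vmax; rewrite inE; exact: subset_closure.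
rewrite (laplacianDZ d Oo Oy dw dq) laplacian_coord_sq.
have := lw y Oy; lra.
Qed.
End maximum_principle.

Lemma dirichlet_comparison {R : realType} {n : nat} (O : set 'rV[R]_n)
    (g1 g2 : 'rV[R]_n -> R -> R) (u1 u2 : 'rV[R]_n -> R) :
  (0 < n)%N -> open O -> bounded_set O ->
  classical_dirichlet_sol O g1 u1 -> classical_dirichlet_sol O g2 u2 ->
  (forall x, O x -> g2 x (u2 x) <= g1 x (u1 x)) ->
  forall x, O x -> u1 x <= u2 x.
Proof.
move=> n0 Oo Ob [u1C2 [u1c [u1b u1eq]]] [u2C2 [u2c [u2b u2eq]]] g21 x Ox.
have du1 := C2_on_partial2_derivable u1C2; have du2 := C2_on_partial2_derivable u2C2.
suff : u1 x + -1 * u2 x <= 0 by lra.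
change ((u1 + -1 \*: u2) x <= 0).
apply: (@subharmonic_le0 R n O (u1 + -1 \*: u2) n0 Oo Ob _ _ _ _ x Ox).
- by apply: within_continuousD u1c _ => z; apply: cvgZl_tmp; exact: u2c.
- move=> z zb; change (u1 z + -1 * u2 z <= 0).
  by rewrite u1b // u2b // mulr0 addr0.
- exact: partial2_derivable_onDZ.
- move=> z Oz; rewrite (laplacianDZ _ Oo Oz du1 du2) u1eq // u2eq //.
  by have := g21 z Oz; lra.
Qed.

Theorem lemma4 (R : realType) (N : nat) (Omega : set 'rV[R]_N)
  (p : R) (beta : R -> R) (u : R -> 'rV[R]_N -> R)
  (A0 : R) (phi0 : 'rV[R]_N -> R) :
  (2 <= N)%N ->
  open Omega -> bounded_set Omega -> connected Omega -> Omega !=set0 ->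
  2 < p ->
  ((3 <= N)%N -> p < 2 * N%:R / (N%:R - 2)) ->
  admissible_beta beta ->
  (forall eps, 0 < eps <= 1 ->
     classical_dirichlet_sol Omega
       (fun _ v => eps^-1 * beta ((v - 1) / eps) - pos_part (v - 1) `^ (p - 1))
       (u eps)) ->
  0 < A0 ->
  (forall eps x, 0 < eps <= 1 -> Omega x -> pos_part (u eps x - 1) `^ (p - 1) <= A0) ->
  classical_dirichlet_sol Omega (fun _ _ => - A0) phi0 ->
  (forall x, Omega x -> 0 < phi0 x) ->
  forall eps, 0 < eps <= 1 ->
    (forall x, Omega x -> u eps x <= phi0 x) /\
    [set x | Omega x /\ 1 <= u eps x] `<=` [set x | Omega x /\ 1 <= phi0 x] /\
    compact (closure [set x | Omega x /\ 1 <= phi0 x]) /\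
    closure [set x | Omega x /\ 1 <= phi0 x] `<=` Omega.
Proof.
move=> N2 Oo Ob _ _ _ _ [_ [beta_ge0 _]] u_sol _ uA0 phi_sol _ eps eps01.
have u_le_phi : forall x, Omega x -> u eps x <= phi0 x.
  apply: (dirichlet_comparison _ Oo Ob (u_sol eps eps01) phi_sol) => [|x Ox].
    exact: leq_trans N2.
  have /andP[beta0 _] := beta_ge0 ((u eps x - 1) / eps).
  have eps_inv : 0 <= eps^-1 by rewrite invr_ge0; case/andP: eps01 => /ltW.
  have := mulr_ge0 eps_inv beta0; have := uA0 _ _ eps01 Ox; lra.
have [_ [phi_cont [phi_bdry _]]] := phi_sol.
have level_sub := closure_superlevel_subset ltr01 phi_cont phi_bdry.
split=> //; split; first by move=> x [Ox ux]; split=> //; exact: le_trans ux (u_le_phi x Ox).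
split=> //; apply: (subclosed_compact _ (compact_closure_bounded Ob)).
  exact: closed_closure.
exact: subset_trans level_sub (@subset_closure _ _).
Qed.
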